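(* Let $R$ be a ring and $M$ a right $R$-module. (1) If $M$ is subinjective extension-reflecting, then $M$ is $FG$-injective if and only if $M$ is $C$-injective. (2) If $M$ is subprojective extension-reflecting, then $M$ is $FG$-projective if and only if $M$ is $C$-projective.
   Context: Modules are unital right $R$-modules. $M$ is $FG$-injective (resp. $C$-injective) if every homomorphism from $M$ to a finitely generated (resp. cyclic) module factors through an injective module. $M$ is $FG$-projective (resp. $C$-projective) if for every epimorphism $f\colon N\to M$ and every homomorphism $g\colon F\to M$ with $F$ finitely generated (resp. cyclic) there is $h\colon F\to N$ with $g=fh$. For modules $X,Y$, $X\in \underline{\mathfrak{In}}^{-1}(Y)$ means: for every module $C$ containing $X$ as a submodule, every homomorphism $X\to Y$ extends to $C\to Y$; $X\in \underline{\mathfrak{Pr}}^{-1}(Y)$ means: for every epimorphism $g\colon B\to X$ and every homomorphism $f\colon Y\to X$ there exists $h\colon Y\to B$ with $gh=f$. $M$ is subinjective extension-reflecting if for every short exact sequence $0\to A\to B\to C\to 0$, $M\in \underline{\mathfrak{In}}^{-1}(A)\cap \underline{\mathfrak{In}}^{-1}(C)$ implies $M\in \underline{\mathfrak{In}}^{-1}(B)$; subprojective extension-reflecting is defined the same way with $\underline{\mathfrak{Pr}}^{-1}$ in place of $\underline{\mathfrak{In}}^{-1}$. *)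

From HB Require Import structures.
From mathcomp Require Import all_boot all_algebra.
Set Implicit Arguments. Unset Strict Implicit. Unset Printing Implicit Defensive.
Import GRing.Theory.
Local Open Scope ring_scope.

(* Right R-modules are modelled as left modules over the converse ring R^c:
   for r : R^c and m : M, [r *: m] stands for the right action m r. *)
Notation rmodType R := (lmodType R^c).

Section ModDefs.
Variable R : pzRingType.

Definition is_hom (M N : rmodType R) (f : M -> N) : Prop :=
  forall (r : R^c) (x y : M), f (r *: x + y) = r *: f x + f y.

Definition fin_gen (M : rmodType R) : Prop :=
  exists s : seq M, forall m : M,
    exists c : nat -> R^c, m = \sum_(i < size s) c i *: s`_i.

Definition cyclic_mod (M : rmodType R) : Prop :=
  exists x : M, forall m : M, exists r : R^c, m = r *: x.

Definition injective_mod (E : rmodType R) : Prop :=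
  forall (A B : rmodType R) (i : A -> B) (f : A -> E),
    is_hom i -> injective i -> is_hom f ->
    exists g : B -> E, is_hom g /\ forall a, g (i a) = f a.

Definition factors_through_injective (M N : rmodType R) (h : M -> N) : Prop :=
  exists (E : rmodType R) (u : M -> E) (v : E -> N),
    [/\ injective_mod E, is_hom u, is_hom v & forall m, h m = v (u m)].

Definition FG_injective (M : rmodType R) : Prop :=
  forall (N : rmodType R) (h : M -> N), fin_gen N -> is_hom h ->
    factors_through_injective h.

Definition C_injective (M : rmodType R) : Prop :=
  forall (N : rmodType R) (h : M -> N), cyclic_mod N -> is_hom h ->
    factors_through_injective h.

Definition FG_projective (M : rmodType R) : Prop :=
  forall (N F : rmodType R) (f : N -> M) (g : F -> M),
    is_hom f -> (forall m, exists n, f n = m) -> is_hom g -> fin_gen F ->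
    exists h : F -> N, is_hom h /\ forall x, g x = f (h x).

Definition C_projective (M : rmodType R) : Prop :=
  forall (N F : rmodType R) (f : N -> M) (g : F -> M),
    is_hom f -> (forall m, exists n, f n = m) -> is_hom g -> cyclic_mod F ->
    exists h : F -> N, is_hom h /\ forall x, g x = f (h x).

(* X \in In^{-1}(Y): for every module C containing X as a submodule (i.e. every
   monomorphism i : X -> C), every homomorphism X -> Y extends to C -> Y. *)
Definition In_inv (X Y : rmodType R) : Prop :=
  forall (C : rmodType R) (i : X -> C) (f : X -> Y),
    is_hom i -> injective i -> is_hom f ->
    exists g : C -> Y, is_hom g /\ forall x, g (i x) = f x.

Definition Pr_inv (X Y : rmodType R) : Prop :=
  forall (B : rmodType R) (g : B -> X) (f : Y -> X),
    is_hom g -> (forall x, exists b, g b = x) -> is_hom f ->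
    exists h : Y -> B, is_hom h /\ forall y, g (h y) = f y.

Definition short_exact (A B C : rmodType R) (f : A -> B) (g : B -> C) : Prop :=
  [/\ is_hom f, is_hom g, injective f, (forall c, exists b, g b = c) &
      forall b, g b = 0 <-> exists a, f a = b].

Definition subinj_ext_refl (M : rmodType R) : Prop :=
  forall (A B C : rmodType R) (f : A -> B) (g : B -> C),
    short_exact f g -> In_inv M A -> In_inv M C -> In_inv M B.

Definition subproj_ext_refl (M : rmodType R) : Prop :=
  forall (A B C : rmodType R) (f : A -> B) (g : B -> C),
    short_exact f g -> Pr_inv M A -> Pr_inv M C -> Pr_inv M B.

End ModDefs.

From HB Require Import structures.
From mathcomp Require Import all_boot all_order all_algebra.
From mathcomp Require Import boolp classical_sets functions.
Set Implicit Arguments. Unset Strict Implicit. Unset Printing Implicit Defensive.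
Import Order.TTheory GRing.Theory Num.Theory.
Local Open Scope ring_scope.
Local Open Scope quotient_scope.

(* A module N generated by x and n further elements sits in an exact sequence
   0 -> xR -> N -> N/xR -> 0 in which N/xR needs only n generators; hence a
   class of modules that is closed under extensions and contains the cyclic
   modules contains all finitely generated ones.  For projectivity this
   applies to the class of F with M in Pr^-1(F), which is exactly the class
   along which M has the lifting property.  For injectivity one needs that
   every map M -> N factors through an injective module iff M is in In^-1(N);
   this holds because M embeds into the injective module
   prod_{phi : Hom_Z(M, Q/Z)} Hom_Z(R, Q/Z): Q/Z separates the points of M,
   and it is divisible, so additive maps into Q/Z extend along monomorphisms
   (Zorn's lemma on partial additive relations). *)

Definition subgroup (V : zmodType) (S : V -> Prop) :=
  S 0 /\ forall x y, S x -> S y -> S (x - y).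

Lemma subgroupN (V : zmodType) (S : V -> Prop) x : subgroup S -> S x -> S (- x).
Proof. by case=> S0 SB Sx; rewrite -sub0r; apply: SB. Qed.

Lemma subgroup_mulz (V : zmodType) (S : V -> Prop) x k :
  subgroup S -> S x -> S (x *~ k).
Proof.
move=> subS Sx; have SMn n : S (x *+ n).
  elim: n => [|n IHn]; first by rewrite mulr0n; case: subS.
  by rewrite mulrSr -[X in _ + X]opprK; apply: subS.2 IHn (subgroupN subS Sx).
by case: k => n; [exact: SMn | rewrite NegzE mulrNz; exact: subgroupN subS (SMn _)].
Qed.

Lemma int_subgroup_dvdz (S : int -> Prop) :
  subgroup S -> exists n : nat, forall k, S k <-> (n %| k)%Z.
Proof.
move=> subS; have S_dvdz n k : S n -> (n %| k)%Z -> S k.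
  by move=> Sn /dvdzP[q ->]; rewrite mulrC -mulrzz; apply: subgroup_mulz.
have [Spos|no_pos] := pselect (exists n, `[< (0 < n)%N /\ S n >]); last first.
  exists 0%N => k; rewrite dvd0z; split=> [Sk|/eqP->]; last by case: subS.
  apply/negPn/negP => k_neq0; apply: no_pos; exists `|k|%N; apply/asboolP.
  split; first by rewrite absz_gt0.
  have [k_ge0|k_lt0] := leP 0 k; first by rewrite gez0_abs.
  by rewrite ltz0_abs //; apply: subgroupN.
case: (ex_minnP Spos) => n /asboolP[n_gt0 Sn] n_min; exists n => k.
split=> [Sk|]; last exact: S_dvdz.
have Sr : S (k %% n)%Z.
  have := subS.2 _ _ Sk (S_dvdz _ ((k %/ n)%Z * n) Sn (dvdz_mull _ (dvdzz _))).
  by rewrite {1}(divz_eq k n) addrAC subrr add0r.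
have r_lt_n : (k %% n)%Z < n by rewrite ltz_pmod ?ltz_nat.
have n_neq0 : n%:Z != 0 by rewrite eqz_nat -lt0n.
apply/dvdz_mod0P; move: Sr r_lt_n (modz_ge0 k n_neq0).
case: (k %% n)%Z => [[|r]|r] // Sr r_lt_n _.
by have := n_min r.+1 (asboolT (conj erefl Sr)); rewrite leqNgt -ltz_nat r_lt_n.
Qed.

Lemma pair_mulz (U V : zmodType) (x : U) (y : V) k : (x, y) *~ k = (x *~ k, y *~ k).
Proof. by rewrite [LHS]surjective_pairing (raddfMz (@fst U V)) (raddfMz (@snd U V)). Qed.

(* [Num.int_num_subdef] is the predicate behind [Num.int]; the clone picks up
   its canonical [zmodClosed] structure. *)
Definition QZ := {ideal_quot (GRing.ZmodClosed.clone rat Num.int_num_subdef _)}.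

Lemma piQZ_eq0 (q : rat) : (\pi_QZ q == 0) = (q \is a Num.int).
Proof. by rewrite -(raddf0 \pi_QZ) -Quotient.idealrBE subr0. Qed.

Lemma QZ_divisible (e : QZ) (n : nat) : (0 < n)%N -> exists d : QZ, d *+ n = e.
Proof.
move=> n_gt0; exists (\pi_QZ (repr e / n%:R)).
by rewrite -raddfMn -[_ *+ n]mulr_natr mulfVK ?pnatr_eq0 -?lt0n //; exact: reprK.
Qed.

Lemma QZ_torsion (n : nat) : (1 < n)%N -> exists2 d : QZ, d != 0 & d *+ n = 0.
Proof.
move=> n_gt1; have n_gt0 : (0 < n)%N by apply: ltn_trans n_gt1.
exists (\pi_QZ n%:R^-1).
  rewrite piQZ_eq0; apply/negP => /intrP[m nm].
  have : 0 < (n%:R^-1 : rat) < 1.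
    by rewrite invr_gt0 ltr0n n_gt0 invf_lt1 ?ltr0n ?ltr1n.
  by rewrite nm ltr0z ltrz1 gtz0_ge1 => /andP[/le_lt_trans lt_m1 /lt_m1]; rewrite ltxx.
apply/eqP; rewrite -raddfMn -[_ *+ n]mulr_natr mulVf ?pnatr_eq0 -?lt0n //.
by rewrite piQZ_eq0 int_num1.
Qed.

Section AdditiveRelation.
Variable B : zmodType.
Implicit Types (A G : set (B * QZ)) (b : B) (d e : QZ).
Local Open Scope classical_set_scope.

Definition additive_rel G :=
  subgroup G /\ forall b d e, G (b, d) -> G (b, e) -> d = e.

Definition adjoin A b d : set (B * QZ) :=
  [set p | exists2 c, A c & exists k : int, p = c + (b, d) *~ k].

Lemma additive_rel_adjoin A b d :
  additive_rel A -> (forall k e, A (b *~ k, e) -> e = d *~ k) ->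
  additive_rel (adjoin A b d).
Proof.
move=> [[A0 AB] Afun] compat; split; first split.
- by exists 0 => //; exists 0; rewrite mulr0z addr0.
- move=> _ _ [c Ac [k ->]] [c' Ac' [k' ->]]; exists (c - c'); first exact: AB.
  by exists (k - k'); rewrite mulrzBr opprD addrACA.
- move=> x e e' [[c1 c2] Ac [k]]; rewrite pair_mulz => -[x_eq ->].
  move=> [[c1' c2'] Ac' [k']]; rewrite pair_mulz => -[x_eq' ->].
  have c1B : c1 - c1' = b *~ (k' - k).
    apply: (addIr (b *~ k)); rewrite addrAC -x_eq x_eq' mulrzBr subrK.
    by rewrite addrAC subrr add0r.
  have := compat (k' - k) (c2 - c2'); rewrite -c1B => /(_ (AB _ _ Ac Ac')) c2B.
  apply/eqP; rewrite -subr_eq0 opprD addrACA c2B -mulrzBr -mulrzDr.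
  by rewrite addrA subrK subrr mulr0z.
Qed.

Lemma additive_rel_compatible A b :
  additive_rel A -> exists d, forall k e, A (b *~ k, e) -> e = d *~ k.
Proof.
move=> [subA Afun]; have [A0 AB] := subA.
have subS : subgroup (fun k => exists e, A (b *~ k, e)).
  split; first by exists 0; rewrite mulr0z.
  by move=> k k' [e Ae] [e' Ae']; exists (e - e'); rewrite mulrzBr; apply: AB Ae Ae'.
have [[|n] Sdvd] := int_subgroup_dvdz subS.
  exists 0 => k e Ae; have /eqP k0 : k == 0 by rewrite -dvd0z; apply/Sdvd; exists e.
  by move: Ae; rewrite k0 !mulr0z => /Afun; apply.
have [en Aen] := (Sdvd n.+1).2 (dvdzz _).
have [d dn] := QZ_divisible en (ltn0Sn n).
exists d => k e Ae; have /dvdzP[q k_eq] := (Sdvd k).1 (ex_intro _ e Ae).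
rewrite k_eq in Ae *; have := subgroup_mulz q subA Aen.
rewrite pair_mulz -dn -mulrz_nat -!mulrzA natz !(mulrC n.+1%:Z).
exact: Afun Ae.
Qed.

Lemma additive_rel_bigcup (F : set (set (B * QZ))) :
  total_on F subset -> (forall X, F X -> X !=set0 -> additive_rel X) ->
  \bigcup_(X in F) X !=set0 -> additive_rel (\bigcup_(X in F) X).
Proof.
move=> Ftot Fadd [p0 [X FX Xp0]].
have common p q : (\bigcup_(X in F) X) p -> (\bigcup_(X in F) X) q ->
    exists Y, [/\ F Y, Y p, Y q & additive_rel Y].
  move=> [Y FY Yp] [Z FZ Zq].
  case: (Ftot _ _ FY FZ) => [/(_ p Yp) Zp|/(_ q Zq) Yq].
    by exists Z; split => //; apply: Fadd => //; exists q.
  by exists Y; split => //; apply: Fadd => //; exists p.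
split; first split.
- by have [[X0 _] _] := Fadd X FX (ex_intro _ p0 Xp0); exists X.
- move=> p q /common/[apply][[Y [FY Yp Yq [[_ YB] _]]]].
  by exists Y => //; apply: YB.
- move=> b d e /common/[apply][[Y [FY Yd Ye [_ Yfun]]]].
  exact: Yfun Yd Ye.
Qed.

Lemma additive_rel_total G0 : additive_rel G0 ->
  exists2 phi : B -> QZ, zmod_morphism phi & forall b d, G0 (b, d) -> phi b = d.
Proof.
move=> G0add; have G000 : G0 (0, 0) by case: G0add => -[].
(* [Zorn_bigcup] also asks for [P] of the empty union, hence the premise. *)
pose P G := G !=set0 -> additive_rel G /\ G0 `<=` G.
have chainP F : F `<=` P -> total_on F subset -> P (\bigcup_(X in F) X).
  move=> FP Ftot Fne; split.
    by apply: additive_rel_bigcup => // X FX /(FP X FX)[].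
  have [p [X FX Xp]] := Fne; have [_ G0X] := FP X FX (ex_intro _ p Xp).
  by move=> q G0q; exists X => //; apply: G0X.
have [A [PA Amax]] := Zorn_bigcup chainP.
have [Aadd G0A] : additive_rel A /\ G0 `<=` A.
  apply: PA; apply: contrapT => /set0P/negP/negPn/eqP A0.
  by apply: (Amax G0) => [|_]; [rewrite A0; split=> // /(_ _ G000) | split].
have Atotal b : exists d, A (b, d).
  apply: contrapT => Ab; have [d compat] := additive_rel_compatible b Aadd.
  have AAd : A `<=` adjoin A b d.
    by move=> p Ap; exists p => //; exists 0; rewrite mulr0z addr0.
  apply: (Amax (adjoin A b d)).
    split=> // /(_ (b, d)) Ad; apply: Ab; exists d; apply: Ad.
    by exists 0; [case: Aadd => -[] | exists 1; rewrite add0r mulr1z].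
  by move=> _; split; [apply: additive_rel_adjoin | apply: subset_trans AAd].
have [phi phiP] := choice Atotal; have [[_ AB] Afun] := Aadd.
exists phi => [x y|b d /G0A]; last exact: Afun.
exact: Afun (phiP (x - y)) (AB _ _ (phiP x) (phiP y)).
Qed.

Lemma QZ_separating (x : B) :
  x != 0 -> exists2 phi : B -> QZ, zmod_morphism phi & phi x != 0.
Proof.
move=> x_neq0; have subS : subgroup (fun k : int => x *~ k = 0).
  by split=> [|k k' /= xk xk']; rewrite ?mulr0z // mulrzBr xk xk' subr0.
have [n ann] := int_subgroup_dvdz subS.
have [d d_neq0 d_ann] : exists2 d : QZ, d != 0 & forall k, x *~ k = 0 -> d *~ k = 0.
  case: n ann => [|[|n]] ann.
  - have [d d_neq0 _] := QZ_torsion (isT : 1 < 2)%N.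
    by exists d => // k /ann; rewrite dvd0z => /eqP ->; rewrite mulr0z.
  - by move: x_neq0; rewrite -[x]mulr1z (ann 1).2 ?eqxx.
  - have [d d_neq0 dn] := QZ_torsion (isT : 1 < n.+2)%N.
    exists d => // k /ann/dvdzP[q ->].
    by rewrite mulrC mulrzA -natz mulrz_nat dn mul0rz.
have zero_add : additive_rel [set 0 : B * QZ].
  by split; [split=> // p q -> ->; rewrite subr0 | move=> b e e' [_ ->] [_ ->]].
have compat k e : [set 0] (x *~ k, e) -> e = d *~ k by case=> /d_ann -> ->.
have [phi phi_add phiE] := additive_rel_total (additive_rel_adjoin zero_add compat).
exists phi => //; rewrite (phiE x d) //.
by exists 0 => //; exists 1; rewrite add0r mulr1z.
Qed.

End AdditiveRelation.

Section HomFacts.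
Variables (R : pzRingType) (M N : rmodType R) (f : M -> N).
Hypothesis f_hom : is_hom f.

Lemma homB : {morph f : x y / x - y}. Proof. exact: zmod_morphism_linear f_hom. Qed.
Lemma homZ : scalable f. Proof. exact: scalable_linear f_hom. Qed.
Lemma hom0 : f 0 = 0. Proof. by rewrite -(subrr 0) homB subrr. Qed.

End HomFacts.

Lemma zmod_morphismD (U V : zmodType) (f : U -> V) :
  zmod_morphism f -> {morph f : x y / x + y}.
Proof. by move=> fB; exact: raddfD (HB.pack f (GRing.isZmodMorphism.Build _ _ f fB)). Qed.

(* [cofree R I] is the I-th power of the right R-module Hom_Z(R, Q/Z), on
   which r acts by (g r)(s) = g (r s). *)
Section Cofree.
Variables (R : pzRingType) (I : Type).
Local Open Scope classical_set_scope.

Definition additive_family : {pred I -> R -> QZ} :=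
  fun g => `[< forall j, zmod_morphism (g j) >].

Fact additive_family_zmod_closed : zmod_closed additive_family.
Proof.
split=> [|g h /asboolP gA /asboolP hA]; apply/asboolP => j s t /=.
  by rewrite subr0.
by rewrite !fctE gA hA !opprD addrACA.
Qed.
HB.instance Definition _ :=
  GRing.isZmodClosed.Build _ additive_family additive_family_zmod_closed.

Definition cofree := {g : I -> R -> QZ | g \in additive_family}.
HB.instance Definition _ := [isSub of cofree for sval].
HB.instance Definition _ := [Choice of cofree by <:].
HB.instance Definition _ := [SubChoice_isSubZmodule of cofree by <:].

Lemma cofree_additive (g : cofree) j : zmod_morphism (sval g j).
Proof. by case: g => g /= /asboolP. Qed.

Lemma cofree_eq (g h : cofree) : (forall j s, sval g j s = sval h j s) -> g = h.
Proof. by move=> gh; apply: val_inj; apply/funext => j; apply/funext => s; apply: gh. Qed.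

Fact cofree_scale_subproof (r : R) (g : cofree) :
  (fun j s => sval g j (r * s)) \in additive_family.
Proof. by apply/asboolP => j s t; rewrite mulrBr cofree_additive. Qed.

Definition cofree_scale (r : R^c) (g : cofree) : cofree :=
  exist (fun h => h \in additive_family) _ (cofree_scale_subproof r g).

Fact cofree_scaleA a b g : cofree_scale a (cofree_scale b g) = cofree_scale (a * b) g.
Proof. by apply: cofree_eq => j s /=; rewrite mulrA. Qed.
Fact cofree_scale1 : left_id 1 cofree_scale.
Proof. by move=> g; apply: cofree_eq => j s /=; rewrite mul1r. Qed.
Fact cofree_scaleDr : right_distributive cofree_scale +%R.
Proof. by move=> a g h; apply: cofree_eq. Qed.
Fact cofree_scaleDl g : {morph cofree_scale^~ g : a b / a + b}.
Proof.
move=> a b; apply: cofree_eq => j s /=.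
by rewrite mulrDl zmod_morphismD //; apply: cofree_additive.
Qed.
HB.instance Definition _ := GRing.Zmodule_isLmodule.Build R^c cofree
  cofree_scaleA cofree_scale1 cofree_scaleDr cofree_scaleDl.

Lemma cofree_injective : injective_mod cofree.
Proof.
move=> A B i f i_hom i_inj f_hom.
have ext j : exists psi : B -> QZ,
    zmod_morphism psi /\ forall a, psi (i a) = sval (f a) j 1.
  pose G0 : set (B * QZ) := [set p | exists a, p = (i a, sval (f a) j 1)].
  have G0add : additive_rel G0.
    split; first split.
    - by exists 0; rewrite !hom0.
    - by move=> _ _ [a ->] [a' ->]; exists (a - a'); rewrite !homB.
    - by move=> b d e [a [-> ->]] [a' [/i_inj -> ->]].
  have [psi psi_add psiE] := additive_rel_total G0add.
  by exists psi; split=> // a; apply: psiE; exists a.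
have [psi /all_and2[psi_add psiE]] := choice ext.
have g_subproof b : (fun j (s : R) => psi j ((s : R^c) *: b)) \in additive_family.
  by apply/asboolP => j s t; rewrite scalerBl psi_add.
exists (fun b => exist (fun h => h \in additive_family) _ (g_subproof b)); split.
  move=> r x y; apply: cofree_eq => j s /=.
  by rewrite scalerDr scalerA zmod_morphismD.
move=> a; apply: cofree_eq => j s /=.
by rewrite -homZ // psiE homZ //= mulr1.
Qed.

End Cofree.

Definition QZ_dual (M : zmodType) := {phi : M -> QZ | zmod_morphism phi}.

Lemma cofree_embedding (R : pzRingType) (M : rmodType R) :
  exists2 u : M -> cofree R (QZ_dual M), is_hom u & injective u.
Proof.
have u_subproof m : (fun (phi : QZ_dual M) (s : R) => sval phi ((s : R^c) *: m))
    \in @additive_family R (QZ_dual M).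
  by apply/asboolP => phi s t; rewrite scalerBl (svalP phi).
exists (fun m => exist (fun h => h \in @additive_family R _) _ (u_subproof m)).
  move=> r x y; apply: cofree_eq => phi s /=.
  by rewrite scalerDr scalerA zmod_morphismD //; apply: svalP.
move=> m m' /(congr1 sval) um; apply/eqP; rewrite -subr_eq0; apply/negPn/negP => mm'.
have [phi phi_add] := QZ_separating mm'; rewrite phi_add.
have := congr1 (fun g => g (exist _ phi phi_add) 1) um; rewrite /= !scale1r => ->.
by rewrite subrr eqxx.
Qed.

Lemma enough_injectives (R : pzRingType) (M : rmodType R) :
  exists (E : rmodType R) (u : M -> E), [/\ injective_mod E, is_hom u & injective u].
Proof.
have [u u_hom u_inj] := cofree_embedding M.
by exists (cofree R (QZ_dual M)), u; split=> //; apply: cofree_injective.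
Qed.

Section SubQuotient.
Variables (R : pzRingType) (N : rmodType R) (S : submodClosed N).

Definition submod := {x : N | x \in S}.
HB.instance Definition _ := [isSub of submod for sval].
HB.instance Definition _ := [Choice of submod by <:].
HB.instance Definition _ := [SubChoice_isSubLmodule of submod by <:].

Fact submod_zmod_closed : zmod_closed S.
Proof. by split=> [|x y Sx Sy]; rewrite ?rpred0 // -scaleN1r rpredD ?rpredZ. Qed.

Definition submod_zmodClosed : zmodClosed N :=
  HB.pack (S : {pred N}) (GRing.isZmodClosed.Build N (S : {pred N}) submod_zmod_closed).

Definition quotmod := {ideal_quot submod_zmodClosed}.
HB.instance Definition _ := GRing.Zmodule.on quotmod.

Lemma quotmod_eqE x y : (x == y %[mod quotmod]) = (x - y \in S).
Proof. by rewrite -Quotient.idealrBE. Qed.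

Lemma quotmod_eq0 x : (\pi_quotmod x == 0) = (x \in S).
Proof. by rewrite -(raddf0 \pi_quotmod) quotmod_eqE subr0. Qed.

Definition quotmod_scale (a : R^c) (x : quotmod) : quotmod := \pi_quotmod (a *: repr x).

Lemma pi_scale a x : \pi_quotmod (a *: x) = quotmod_scale a (\pi_quotmod x).
Proof.
apply/eqP; rewrite /quotmod_scale quotmod_eqE -scalerBr rpredZ // -quotmod_eqE.
by rewrite reprK.
Qed.

Fact quotmod_scaleA a b x :
  quotmod_scale a (quotmod_scale b x) = quotmod_scale (a * b) x.
Proof. by elim/quotW: x => x; rewrite -(pi_scale b) -!pi_scale scalerA. Qed.
Fact quotmod_scale1 : left_id 1 quotmod_scale.
Proof. by elim/quotW => x; rewrite -pi_scale scale1r. Qed.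
Fact quotmod_scaleDr : right_distributive quotmod_scale +%R.
Proof.
by move=> a; elim/quotW => x; elim/quotW => y; rewrite -raddfD -!pi_scale scalerDr raddfD.
Qed.
Fact quotmod_scaleDl x : {morph quotmod_scale^~ x : a b / a + b}.
Proof. by move=> a b; elim/quotW: x => x; rewrite -!pi_scale scalerDl raddfD. Qed.

HB.instance Definition _ := GRing.Zmodule_isLmodule.Build R^c quotmod
  quotmod_scaleA quotmod_scale1 quotmod_scaleDr quotmod_scaleDl.

Lemma submod_quotmod_exact :
  short_exact (val : submod -> N) (\pi_quotmod : N -> quotmod).
Proof.
split.
- by move=> r x y.
- by move=> r x y; rewrite raddfD; congr (_ + _); apply: pi_scale.
- exact: val_inj.
- by move=> m; exists (repr m); rewrite reprK.
move=> b; split=> [/eqP|[a <-]]; last by apply/eqP; rewrite quotmod_eq0; apply: valP.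
by rewrite quotmod_eq0 => Sb; exists (Sub b Sb); rewrite SubK.
Qed.

End SubQuotient.

Section FinGenInduction.
Variable R : pzRingType.

Definition cyclic_span (N : rmodType R) (x : N) : {pred N} :=
  fun y => `[< exists r : R^c, y = r *: x >].

Fact cyclic_span_closed (N : rmodType R) (x : N) : subsemimod_closed (cyclic_span x).
Proof.
split; first split.
- by apply/asboolP; exists 0; rewrite scale0r.
- move=> _ _ /asboolP[r ->] /asboolP[r' ->]; apply/asboolP.
  by exists (r + r'); rewrite scalerDl.
- by move=> a _ /asboolP[r ->]; apply/asboolP; exists (a * r); rewrite scalerA.
Qed.
HB.instance Definition _ (N : rmodType R) (x : N) :=
  GRing.isSubmodClosed.Build _ _ (cyclic_span x) (cyclic_span_closed x).

Lemma cyclic_mod_span (N : rmodType R) (x : N) : cyclic_mod (submod (cyclic_span x)).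
Proof.
have x_in : x \in cyclic_span x by apply/asboolP; exists 1; rewrite scale1r.
exists (Sub x x_in) => m; have /asboolP[r m_eq] := valP m.
by exists r; apply: val_inj; rewrite /= m_eq.
Qed.

Lemma cyclic_fin_gen (N : rmodType R) : cyclic_mod N -> fin_gen N.
Proof.
case=> x gen_x; exists [:: x] => m; have [r ->] := gen_x m.
by exists (fun _ => r); rewrite big_ord1.
Qed.

Definition extension_closed (Q : rmodType R -> Prop) :=
  forall (A B C : rmodType R) (f : A -> B) (g : B -> C),
    short_exact f g -> Q A -> Q C -> Q B.

Lemma fin_gen_ind (Q : rmodType R -> Prop) :
  extension_closed Q -> (forall N, cyclic_mod N -> Q N) ->
  forall N, fin_gen N -> Q N.
Proof.
move=> Qext Qcyc N [s]; move size_s : (size s) => n.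
elim: n N s size_s => [|n IHn] N s.
  move=> _ gen_s; apply: Qcyc; exists 0 => m; exists 0; rewrite scaler0.
  by have [c ->] := gen_s m; rewrite big_ord0.
case: s => [|x s] //= [size_s] gen_s.
apply: Qext (submod_quotmod_exact (cyclic_span x)) (Qcyc _ (cyclic_mod_span x)) _.
pose pi : N -> quotmod (cyclic_span x) := \pi.
apply: (IHn _ (map pi s)); first by rewrite size_map.
move=> m; have [c m_eq] := gen_s (repr m).
exists (fun i => c i.+1); rewrite -[m]reprK m_eq raddf_sum big_ord_recl /=.
have /eqP -> : \pi_(quotmod (cyclic_span x)) (c 0%N *: x) == 0.
  by rewrite quotmod_eq0; apply/asboolP; exists (c 0%N).
rewrite add0r; apply: eq_bigr => i _.
by rewrite (nth_map 0) ?size_s //; apply: pi_scale.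
Qed.

Lemma fin_gen_cyclic_iff (Q : rmodType R -> Prop) :
  extension_closed Q ->
  (forall N, fin_gen N -> Q N) <-> (forall N, cyclic_mod N -> Q N).
Proof.
by move=> Qext; split=> [Qfg N /cyclic_fin_gen | ]; [apply: Qfg | apply: fin_gen_ind].
Qed.

End FinGenInduction.

Section ClassCharacterizations.
Variables (R : pzRingType) (M : rmodType R) (P : rmodType R -> Prop).

Lemma factors_through_injective_In_inv :
  (forall (N : rmodType R) (h : M -> N), P N -> is_hom h -> factors_through_injective h) <->
  (forall N, P N -> In_inv M N).
Proof.
split=> [fact N PN C i f i_hom i_inj f_hom | MN N h PN h_hom].
  have [E [u [v [E_inj u_hom v_hom fE]]]] := fact N f PN f_hom.
  have [w [w_hom wE]] := E_inj M C i u i_hom i_inj u_hom.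
  exists (v \o w); split=> [r x y | x] /=; first by rewrite w_hom v_hom.
  by rewrite wE fE.
have [E [u [E_inj u_hom u_inj]]] := enough_injectives M.
have [v [v_hom vE]] := MN N PN E u h u_hom u_inj h_hom.
by exists E, u, v; split=> // m; rewrite vE.
Qed.

Lemma lifts_Pr_inv :
  (forall (N F : rmodType R) (f : N -> M) (g : F -> M),
     is_hom f -> (forall m, exists n, f n = m) -> is_hom g -> P F ->
     exists h : F -> N, is_hom h /\ forall x, g x = f (h x)) <->
  (forall F, P F -> Pr_inv M F).
Proof.
split=> [lift F PF B g f g_hom g_surj f_hom | MF N F f g f_hom f_surj g_hom PF].
  have [h [h_hom hE]] := lift B F g f g_hom g_surj f_hom PF.
  by exists h; split=> // y; rewrite hE.
have [h [h_hom hE]] := MF F PF N f g f_hom f_surj g_hom.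
by exists h; split=> // x; rewrite hE.
Qed.

End ClassCharacterizations.

Theorem mainTheorem9 (R : pzRingType) (M : rmodType R) :
  (subinj_ext_refl M -> (FG_injective M <-> C_injective M)) /\
  (subproj_ext_refl M -> (FG_projective M <-> C_projective M)).
Proof.
split=> ext_refl.
  apply: iff_trans (factors_through_injective_In_inv M (@fin_gen R)) _.
  apply: iff_trans (fin_gen_cyclic_iff (Q := In_inv M) ext_refl) _.
  exact: iff_sym (factors_through_injective_In_inv M (@cyclic_mod R)).
apply: iff_trans (lifts_Pr_inv M (@fin_gen R)) _.
apply: iff_trans (fin_gen_cyclic_iff (Q := Pr_inv M) ext_refl) _.
exact: iff_sym (lifts_Pr_inv M (@cyclic_mod R)).
Qed.
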